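(* Let $G=(m,n,\boldsymbol{c},\boldsymbol{d},r_{\max},r_{\min})$ be an interbank lending game, let $\alpha\in(0,1]$, and let $\boldsymbol{s}^1\in\boldsymbol{S}$ be any initial strategy profile. Then the randomised $\alpha$-uniform best-response dynamics $(\boldsymbol{s}^t)_{t\in\mathbb{N}}$ started at $\boldsymbol{s}^1$ converges almost surely to the unique pure Nash equilibrium $\boldsymbol{s}^*$ of $G$.
   Context: An interbank lending game $G=(m,n,\boldsymbol{c},\boldsymbol{d},r_{\max},r_{\min})$ consists of positive integers $m,n$, budgets $\boldsymbol{c}\in\mathbb{R}_{>0}^m$, demands $\boldsymbol{d}\in\mathbb{R}_{>0}^n$ and reals $0<r_{\min}<r_{\max}$. The players are the lenders $L=\{1,\dots,m\}$; $B=\{1,\dots,n\}$ is the set of borrowers. Lender $i$'s strategy set is $S_i=\{s_i\in\mathbb{R}_{\ge0}^n:\sum_{j\in B}s_{ij}\le c_i\}$, the strategy space is $\boldsymbol{S}=\prod_{i\in L}S_i$ with elements $\boldsymbol{s}=(s_{ij})$. The interest rate of borrower $j$ is $r_j(\boldsymbol{s})=(r_{\min}-r_{\max})\frac{\sum_{i\in L}s_{ij}}{d_j}+r_{\max}$ and lender $i$'s utility is $u_i(\boldsymbol{s})=\sum_{j\in B}(r_j(\boldsymbol{s})-r_{\min})s_{ij}$. A pure Nash equilibrium is $\boldsymbol{s}^*\in\boldsymbol{S}$ with $u_i(\boldsymbol{s}^* )\ge u_i(s_i,\boldsymbol{s}^*_{-i})$ for all $i\in L$, $s_i\in S_i$;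 $G$ has exactly one. For $\boldsymbol{s}\in\boldsymbol{S}$, lender $i$'s best-response set is $\mathrm{BR}_i(\boldsymbol{s})=\arg\max\{u_i(z_i,\boldsymbol{s}_{-i}):z_i\in S_i\}$. In the randomised $\alpha$-uniform best-response dynamics, at each time step $t$ the updating lender $i^t\in L$ is drawn at random according to a given probability distribution $\pi^t$ on $L$ (independently of the earlier draws), where there is a constant $p_{\min}>0$ with $\pi^t(i)\ge p_{\min}$ for all $t$ and all $i\in L$; then $\boldsymbol{s}^{t+1}=(s^{t+1}_{i^t},\boldsymbol{s}^t_{-i^t})$ with $s^{t+1}_{i^t}=s^t_{i^t}+\alpha(\hat s^t_{i^t}-s^t_{i^t})$ for some $\hat s^t_{i^t}\in\mathrm{BR}_{i^t}(\boldsymbol{s}^t)$. Convergence means $\boldsymbol{s}^t\to\boldsymbol{s}^*$ as $t\to\infty$. *)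

From HB Require Import structures.
From mathcomp Require Import all_boot all_order all_algebra.
From mathcomp Require Import all_classical all_reals all_analysis.
Set Implicit Arguments. Unset Strict Implicit. Unset Printing Implicit Defensive.
Import Order.TTheory GRing.Theory Num.Theory.
Import numFieldNormedType.Exports.
Local Open Scope classical_set_scope.
Local Open Scope ring_scope.

Section Game.
Variables (R : realType) (m n : nat).
Variables (c : 'I_m -> R) (d : 'I_n -> R) (rmax rmin : R).

Definition in_strat (i : 'I_m) (z : 'I_n -> R) : Prop :=
  (forall j, 0 <= z j) /\ \sum_(j < n) z j <= c i.

Definition in_profile (s : 'M[R]_(m, n)) : Prop :=
  forall i, in_strat i (fun j => s i j).

Definition rate (s : 'M[R]_(m, n)) (j : 'I_n) : R :=
  (rmin - rmax) * ((\sum_(i < m) s i j) / d j) + rmax.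

Definition util (i : 'I_m) (s : 'M[R]_(m, n)) : R :=
  \sum_(j < n) (rate s j - rmin) * s i j.

Definition replace_row (s : 'M[R]_(m, n)) (i : 'I_m) (z : 'I_n -> R)
  : 'M[R]_(m, n) :=
  \matrix_(k, j) (if k == i then z j else s k j).

Definition is_best_response (i : 'I_m) (s : 'M[R]_(m, n)) (z : 'I_n -> R) : Prop :=
  in_strat i z /\
  forall z', in_strat i z' -> util i (replace_row s i z') <= util i (replace_row s i z).

Definition is_pure_NE (s : 'M[R]_(m, n)) : Prop :=
  in_profile s /\
  forall i z, in_strat i z -> util i (replace_row s i z) <= util i s.

Definition alpha_update (alpha : R) (s : 'M[R]_(m, n)) (i : 'I_m) (shat : 'I_n -> R)
  : 'M[R]_(m, n) :=
  replace_row s i (fun j => s i j + alpha * (shat j - s i j)).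

End Game.

From HB Require Import structures.
From mathcomp Require Import all_boot all_order all_algebra.
From mathcomp Require Import all_classical all_reals all_analysis.
From mathcomp Require Import ring lra.
Set Implicit Arguments. Unset Strict Implicit. Unset Printing Implicit Defensive.
Import Order.TTheory GRing.Theory Num.Theory.
Import numFieldNormedType.Exports.
Local Open Scope classical_set_scope.
Local Open Scope ring_scope.

(* The game is an exact potential game. Writing L_j = sum_k s_kj for the load of
   borrower j, b = rmax - rmin and a_j = b / d_j, moving row i by x changes both
   u_i and
     Phi(s) = sum_j (b L_j - a_j / 2 (L_j^2 + sum_k s_kj^2))
   by the same amount: a linear gain minus the positive definite form
   sum_j a_j x_j^2. Hence best responses are unique, every alpha-step increases
   Phi, and, sstar being a Nash equilibrium, V(s) = Phi(sstar) - Phi(s) dominates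
   a_j / 2 (s_ij - sstar_ij)^2 for every entry. While V >= eps, the lender with the
   largest linear gain towards sstar gains at least eps / m, so its steps decrease V
   by a fixed amount: the run converges as soon as that lender updates infinitely
   often. Since best responses are unique, that lender is a function of the
   earlier draws, each draw hits it with probability at least pmin independently
   of the past, and missing it L times in a row has probability at most
   (1 - pmin)^L. *)

Lemma sumr_sqrD (R : comRingType) (p : nat) (x y : 'I_p -> R) :
  \sum_(i < p) (x i + y i) ^+ 2 =
  \sum_(i < p) x i ^+ 2 + 2 * \sum_(i < p) x i * y i + \sum_(i < p) y i ^+ 2.
Proof. by rewrite mulr_sumr -!big_split /=; apply: eq_bigr => i _; ring. Qed.

Lemma quad_le0_slope_le0 (R : realFieldType) (g q : R) : 0 <= q ->
  (forall t, 0 < t <= 1 -> t * g - t ^+ 2 * q <= 0) -> g <= 0.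
Proof.
move=> q_ge0 quad_le0; rewrite leNgt; apply/negP => g_gt0.
have gq_gt0 : 0 < g + q by lra.
pose t := g / (g + q).
have tE : t * (g + q) = g by rewrite /t divfK // gt_eqF.
have t_gt0 : 0 < t by rewrite /t divr_gt0.
have t_le1 : t <= 1.
  rewrite -(ler_pM2r g_gt0) mul1r; have := mulr_ge0 (ltW t_gt0) q_ge0.
  by rewrite mulrDr in tE; lra.
have quadE : t * g - t ^+ 2 * q = t * (t * g) by rewrite -[in LHS]tE; ring.
have := quad_le0 t (andb_true_intro (conj t_gt0 t_le1)); rewrite quadE.
by have := mulr_gt0 t_gt0 (mulr_gt0 t_gt0 g_gt0); lra.
Qed.

Lemma quad_gain_lower_bound (R : realFieldType) (eta g q D : R) :
  0 < eta -> eta <= g -> 0 <= q <= D ->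
  let tau := eta / (eta + 2 * D) in
  [/\ 0 < tau, tau <= 1 & tau * eta / 2 <= tau * g - tau ^+ 2 * q].
Proof.
move=> eta_gt0 eta_le_g /andP[q_ge0 q_le_D] tau.
have etaD_gt0 : 0 < eta + 2 * D by lra.
have tauE : tau * (eta + 2 * D) = eta by rewrite /tau divfK // gt_eqF.
have tau_gt0 : 0 < tau by rewrite /tau divr_gt0.
split=> //; first nra.
have tauD_le : tau * D <= eta / 2 by nra.
by rewrite expr2; nra.
Qed.

Lemma cvg_mx_entrywise (R : realType) m n (u : nat -> 'M[R]_(m, n)) (L : 'M[R]_(m, n)) :
  (forall e : R, 0 < e -> forall i j, \forall t \near \oo, `|L i j - u t i j| < e) ->
  u @ \oo --> L.
Proof.
move=> entry_cvg; apply/cvgrPdist_lt => e e_gt0.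
have entry_near (ij : 'I_m * 'I_n) :
  \forall t \near \oo, `|L ij.1 ij.2 - u t ij.1 ij.2| < e by exact: entry_cvg.
apply: (filterS _ (@filter_forall _ _ _ \oo _ entry_near)) => t entries_lt.
rewrite [X in X < _]/Num.Def.normr /= mx_normrE.
by apply: bigmax_lt => //= ij _; rewrite !mxE.
Qed.

Section Game.
Variables (R : realType) (m n : nat).
Variables (c : 'I_m -> R) (d : 'I_n -> R) (rmax rmin : R).
Hypothesis d_gt0 : forall j, 0 < d j.
Hypothesis rmin_lt_rmax : rmin < rmax.

Local Notation util := (util d rmax rmin).
Local Notation in_strat := (in_strat c).
Local Notation in_profile := (in_profile c).
Local Notation is_best_response := (is_best_response c d rmax rmin).
Local Notation is_pure_NE := (is_pure_NE c d rmax rmin).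

Definition spread := rmax - rmin.
Definition slope (j : 'I_n) := spread / d j.
Definition load (s : 'M[R]_(m, n)) j := \sum_(k < m) s k j.
(* [marginal s k j] is the partial derivative of [potential] in [s k j]. *)
Definition marginal (s : 'M[R]_(m, n)) k j := spread - slope j * (load s j + s k j).
Definition dev_lin (s : 'M[R]_(m, n)) i (x : 'I_n -> R) :=
  \sum_(j < n) marginal s i j * x j.
Definition dev_quad (x : 'I_n -> R) := \sum_(j < n) slope j * x j ^+ 2.
Definition dev_gain s i x := dev_lin s i x - dev_quad x.
Definition potential (s : 'M[R]_(m, n)) :=
  \sum_(j < n) (spread * load s j - slope j / 2 * (load s j ^+ 2 + \sum_(k < m) s k j ^+ 2)).
Definition curvature (e : 'M[R]_(m, n)) :=
  \sum_(j < n) slope j / 2 * (load e j ^+ 2 + \sum_(k < m) e k j ^+ 2).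

Lemma spread_gt0 : 0 < spread. Proof. by rewrite subr_gt0. Qed.

Lemma slope_gt0 j : 0 < slope j. Proof. by rewrite divr_gt0 ?spread_gt0. Qed.

Lemma rate_subr s j : rate d rmax rmin s j - rmin = spread - slope j * load s j.
Proof. rewrite /rate /slope /spread /load; ring. Qed.

Lemma load_replace_row s i z j : load (replace_row s i z) j = load s j + (z j - s i j).
Proof.
rewrite /load (bigD1 i) //= [in RHS](bigD1 i) //= !mxE eqxx.
rewrite (eq_bigr (fun k => s k j)) => [|k /negbTE ki]; last by rewrite mxE ki.
ring.
Qed.

Lemma util_replace_row s i z :
  util i (replace_row s i z) - util i s = dev_gain s i (fun j => z j - s i j).
Proof.
rewrite /util /dev_gain /dev_lin /dev_quad -!sumrB; apply: eq_bigr => j _.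
by rewrite !rate_subr load_replace_row !mxE eqxx /marginal; ring.
Qed.

Lemma potentialD s e :
  potential (s + e) = potential s + \sum_(k < m) dev_lin s k (e k) - curvature e.
Proof.
rewrite /potential /curvature /dev_lin exchange_big /= -big_split -sumrB /=.
apply: eq_bigr => j _.
have loadD : load (s + e) j = load s j + load e j.
  by rewrite /load -big_split; apply: eq_bigr => k _; rewrite mxE.
have sqrD : \sum_(k < m) (s + e) k j ^+ 2 = \sum_(k < m) (s k j + e k j) ^+ 2.
  by apply: eq_bigr => k _; rewrite mxE.
have linE : \sum_(k < m) marginal s k j * e k j =
    spread * load e j - slope j * load s j * load e j
    - slope j * \sum_(k < m) s k j * e k j.
  rewrite (eq_bigr (fun k => spread * e k j - slope j * load s j * e k j
                            - slope j * (s k j * e k j))) => [|k _]; last first.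
    by rewrite /marginal; ring.
  by rewrite !sumrB -!mulr_sumr.
by rewrite loadD sqrD sumr_sqrD linE; field.
Qed.

Lemma potential_replace_row s i z :
  potential (replace_row s i z) - potential s = dev_gain s i (fun j => z j - s i j).
Proof.
pose x j := z j - s i j.
pose e := \matrix_(k, j) (if k == i then x j else 0) : 'M[R]_(m, n).
have e_col (F : R -> R) j : F 0 = 0 -> \sum_(k < m) F (e k j) = F (x j).
  move=> F0; rewrite (bigD1 i) //= big1 => [|k /negbTE ki]; last by rewrite mxE ki.
  by rewrite mxE eqxx addr0.
have -> : replace_row s i z = s + e.
  by apply/matrixP => k j; rewrite !mxE; case: eqP => [->|]; [rewrite /x; ring|rewrite addr0].
rewrite potentialD.
have -> : \sum_(k < m) dev_lin s k (e k) = dev_lin s i x.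
  rewrite (bigD1 i) //= big1 => [|k /negbTE ki].
    by rewrite addr0; apply: eq_bigr => j _; rewrite mxE eqxx.
  by rewrite /dev_lin big1 // => j _; rewrite mxE ki mulr0.
have -> : curvature e = dev_quad x.
  rewrite /curvature /dev_quad; apply: eq_bigr => j _.
  rewrite /load (e_col id) // (e_col (fun y => y ^+ 2)); first by field.
  by rewrite expr2 mulr0.
rewrite /dev_gain; ring.
Qed.

Lemma dev_quad_ge0 x : 0 <= dev_quad x.
Proof. by apply: sumr_ge0 => j _; rewrite mulr_ge0 ?sqr_ge0 ?ltW ?slope_gt0. Qed.

Lemma dev_gainZ s i t x :
  dev_gain s i (fun j => t * x j) = t * dev_lin s i x - t ^+ 2 * dev_quad x.
Proof.
by rewrite /dev_gain /dev_lin /dev_quad !mulr_sumr; congr (_ - _); apply: eq_bigr => j _; ring.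
Qed.

Lemma dev_gain_midpoint s i x y :
  dev_gain s i (fun j => (x j + y j) / 2) - (dev_gain s i x + dev_gain s i y) / 2 =
  \sum_(j < n) slope j / 4 * (x j - y j) ^+ 2.
Proof.
rewrite /dev_gain /dev_lin /dev_quad -!sumrB -big_split /= mulr_suml -sumrB.
by apply: eq_bigr => j _; field.
Qed.

Lemma in_strat_le i (z : 'I_n -> R) j : in_strat i z -> z j <= c i.
Proof. by move=> [z0 zc]; apply: le_trans zc; rewrite (bigD1 j) //= lerDl sumr_ge0. Qed.

Lemma in_strat_conv i (x y : 'I_n -> R) t : in_strat i x -> in_strat i y -> 0 <= t <= 1 ->
  in_strat i (fun j => x j + t * (y j - x j)).
Proof.
move=> [x0 xc] [y0 yc] /andP[t0 t1]; split=> [j|].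
  by have := x0 j; have := y0 j; nra.
have -> : \sum_(j < n) (x j + t * (y j - x j)) =
    (1 - t) * \sum_(j < n) x j + t * \sum_(j < n) y j.
  by rewrite !mulr_sumr -big_split /=; apply: eq_bigr => j _; ring.
nra.
Qed.

Lemma dev_gain_le_best_response i s shat z :
  is_best_response i s shat -> in_strat i z ->
  dev_gain s i (fun j => z j - s i j) <= dev_gain s i (fun j => shat j - s i j).
Proof. by move=> [_ shat_max] zS; rewrite -!util_replace_row lerD2r shat_max. Qed.

(* The potential is strictly concave along a row: comparing two best
   responses with their midpoint forces them to coincide. *)
Lemma best_response_unique i s z1 z2 :
  is_best_response i s z1 -> is_best_response i s z2 -> z1 = z2.
Proof.
move=> B1 B2.
pose x1 j := z1 j - s i j; pose x2 j := z2 j - s i j.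
have mid_strat := in_strat_conv B1.1 B2.1 (t := 1 / 2) ltac:(lra).
have mid_le := dev_gain_le_best_response B1 mid_strat.
have mid_eq : (fun j => z1 j + 1 / 2 * (z2 j - z1 j) - s i j) = (fun j => (x1 j + x2 j) / 2).
  by apply/funext => j; rewrite /x1 /x2; field.
have := dev_gain_midpoint s i x1 x2; rewrite -mid_eq.
have := dev_gain_le_best_response B1 B2.1; have := dev_gain_le_best_response B2 B1.1.
rewrite -/x1 -/x2 => le21 le12 mid_gap.
have term_ge0 j : 0 <= slope j / 4 * (x1 j - x2 j) ^+ 2.
  by rewrite mulr_ge0 ?sqr_ge0 // divr_ge0 // ltW // slope_gt0.
have /eqP : \sum_(j < n) slope j / 4 * (x1 j - x2 j) ^+ 2 == 0.
  by rewrite eq_le sumr_ge0 ?andbT //; lra.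
move=> /psumr_eq0P => /(_ (fun j _ => term_ge0 j)) terms0.
apply/funext => j; move/eqP: (terms0 j isT).
have slope4_neq0 : slope j / 4 != 0 by rewrite gt_eqF // divr_gt0 // slope_gt0.
rewrite mulf_eq0 (negbTE slope4_neq0) sqrf_eq0 subr_eq0 /= => /eqP.
by rewrite /x1 /x2 => /addIr.
Qed.

Lemma in_profile_alpha_update al s i shat :
  in_profile s -> is_best_response i s shat -> 0 <= al <= 1 ->
  in_profile (alpha_update al s i shat).
Proof.
move=> s_prof B al01 k; case: (eqVneq k i) => [->|ki].
  have -> : (fun j => alpha_update al s i shat i j) = (fun j => s i j + al * (shat j - s i j)).
    by apply/funext => j; rewrite mxE eqxx.
  exact: in_strat_conv (s_prof i) B.1 al01.
have -> : (fun j => alpha_update al s i shat k j) = s k.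
  by apply/funext => j; rewrite mxE (negbTE ki).
exact: s_prof.
Qed.

Lemma potential_alpha_update al s i shat : 0 <= al <= 1 ->
  al * dev_gain s i (fun j => shat j - s i j) <=
  potential (alpha_update al s i shat) - potential s.
Proof.
move=> /andP[al0 al1]; rewrite potential_replace_row.
have -> : (fun j => s i j + al * (shat j - s i j) - s i j) = (fun j => al * (shat j - s i j)).
  by apply/funext => j; ring.
rewrite dev_gainZ /dev_gain.
have al1' : 0 <= 1 - al by rewrite subr_ge0.
have := mulr_ge0 (mulr_ge0 al0 al1') (dev_quad_ge0 (fun j => shat j - s i j)).
by rewrite expr2; lra.
Qed.

Lemma dev_gain_best_response_ge (s sstar : 'M[R]_(m, n)) i shat t :
  in_strat i (s i) -> in_strat i (sstar i) -> is_best_response i s shat -> 0 <= t <= 1 ->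
  t * dev_lin s i (fun j => sstar i j - s i j) - t ^+ 2 * dev_quad (fun j => sstar i j - s i j)
  <= dev_gain s i (fun j => shat j - s i j).
Proof.
move=> s_i sstar_i B t01; have := dev_gain_le_best_response B (in_strat_conv s_i sstar_i t01).
have -> : (fun j => s i j + t * (sstar i j - s i j) - s i j) = (fun j => t * (sstar i j - s i j)).
  by apply/funext => j; ring.
by rewrite dev_gainZ.
Qed.

Lemma dev_gain_best_response_ge0 (s : 'M[R]_(m, n)) i shat :
  in_strat i (s i) -> is_best_response i s shat -> 0 <= dev_gain s i (fun j => shat j - s i j).
Proof.
move=> s_i B; have := dev_gain_best_response_ge s_i s_i B (t := 0) ltac:(lra).
by rewrite mul0r expr0n mul0r subr0.
Qed.

Lemma pure_NE_dev_lin_le0 (sstar s : 'M[R]_(m, n)) i : is_pure_NE sstar -> in_profile s ->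
  dev_lin sstar i (fun j => s i j - sstar i j) <= 0.
Proof.
move=> [sstar_prof sstar_NE] s_prof.
apply: (quad_le0_slope_le0 (dev_quad_ge0 (fun j => s i j - sstar i j))) => t /andP[t0 t1].
have t01 : 0 <= t <= 1 by rewrite ltW.
have := sstar_NE i _ (in_strat_conv (sstar_prof i) (s_prof i) t01).
rewrite -subr_le0 util_replace_row.
have -> : (fun j => sstar i j + t * (s i j - sstar i j) - sstar i j) =
    (fun j => t * (s i j - sstar i j)) by apply/funext => j; ring.
by rewrite dev_gainZ.
Qed.

Lemma curvature_term_ge0 (e : 'M[R]_(m, n)) j :
  0 <= slope j / 2 * (load e j ^+ 2 + \sum_(k < m) e k j ^+ 2).
Proof.
apply: mulr_ge0; first by rewrite divr_ge0 // ltW // slope_gt0.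
by rewrite addr_ge0 ?sqr_ge0 // sumr_ge0 // => k _; rewrite sqr_ge0.
Qed.

Lemma curvature_ge0 (e : 'M[R]_(m, n)) : 0 <= curvature e.
Proof. by apply: sumr_ge0 => j _; exact: curvature_term_ge0. Qed.

Lemma curvature_ge_entry (e : 'M[R]_(m, n)) k j : slope j / 2 * e k j ^+ 2 <= curvature e.
Proof.
rewrite /curvature (bigD1 j) //=.
apply: le_trans (_ : _ <= slope j / 2 * (load e j ^+ 2 + \sum_(k' < m) e k' j ^+ 2)) _.
  rewrite ler_pM2l; last by rewrite divr_gt0 // slope_gt0.
  apply: ler_wpDl; first exact: sqr_ge0.
  by rewrite (bigD1 k) //= lerDl sumr_ge0 // => k' _; rewrite sqr_ge0.
by rewrite lerDl sumr_ge0 // => j' _; exact: curvature_term_ge0.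
Qed.

Lemma potential_gap_ge_curvature (sstar s : 'M[R]_(m, n)) :
  is_pure_NE sstar -> in_profile s ->
  curvature (s - sstar) <= potential sstar - potential s.
Proof.
move=> sstar_NE s_prof.
have := potentialD sstar (s - sstar); rewrite addrC subrK => ->.
have : \sum_(k < m) dev_lin sstar k ((s - sstar) k) <= 0.
  apply: sumr_le0 => k _.
  have -> : (s - sstar) k = (fun j => s k j - sstar k j) by apply/funext => j; rewrite !mxE.
  exact: pure_NE_dev_lin_le0.
lra.
Qed.

Lemma potential_gap_le_dev_lin (sstar s : 'M[R]_(m, n)) :
  potential sstar - potential s <= \sum_(k < m) dev_lin s k (fun j => sstar k j - s k j).
Proof.
have := potentialD s (sstar - s); rewrite addrC subrK => ->.
have -> : \sum_(k < m) dev_lin s k ((sstar - s) k) =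
    \sum_(k < m) dev_lin s k (fun j => sstar k j - s k j).
  by apply: eq_bigr => k _; congr dev_lin; apply/funext => j; rewrite !mxE.
by have := curvature_ge0 (sstar - s); lra.
Qed.

Definition strat_diam := \sum_(k < m) \sum_(j < n) slope j * c k ^+ 2.

Lemma strat_diam_ge0 : 0 <= strat_diam.
Proof.
by apply: sumr_ge0 => k _; apply: sumr_ge0 => j _; rewrite mulr_ge0 ?sqr_ge0 // ltW // slope_gt0.
Qed.

Lemma dev_quad_le_strat_diam i x y : in_strat i x -> in_strat i y ->
  dev_quad (fun j => y j - x j) <= strat_diam.
Proof.
move=> x_i y_i; apply: (@le_trans _ _ (\sum_(j < n) slope j * c i ^+ 2)).
  apply: ler_sum => j _; apply: ler_wpM2l; first exact: ltW (slope_gt0 j).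
  have := in_strat_le j x_i; have := in_strat_le j y_i; have := x_i.1 j; have := y_i.1 j.
  move=> y0 x0 yc xc; have yx_ge0 : 0 <= c i - y j + x j by lra.
  have xy_ge0 : 0 <= c i + y j - x j by lra.
  by have := mulr_ge0 yx_ge0 xy_ge0; rewrite !expr2; lra.
rewrite /strat_diam (bigD1 i) //= lerDl.
by apply: sumr_ge0 => k _; apply: sumr_ge0 => j _; rewrite mulr_ge0 ?sqr_ge0 // ltW // slope_gt0.
Qed.

Lemma alpha_run_prefix_determined (T : Type) al (I : nat -> T -> 'I_m)
    (s : nat -> T -> 'M[R]_(m, n)) :
  (forall w w', s 0%N w = s 0%N w') ->
  (forall t w, exists shat, is_best_response (I t w) (s t w) shat /\
     s t.+1 w = alpha_update al (s t w) (I t w) shat) ->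
  forall t w w', (forall k, (k < t)%N -> I k w = I k w') -> s t w = s t w'.
Proof.
move=> s0 s_step; elim=> [|t IH] w w' same_draws; first exact: s0.
have [sh [B ->]] := s_step t w; have [sh' [B' ->]] := s_step t w'.
have It : I t w = I t w' by exact: same_draws.
have st : s t w = s t w' by apply: IH => k kt; apply: same_draws; exact: ltnW.
rewrite It st in B *; by rewrite (best_response_unique B B').
Qed.

Section Descent.
Hypothesis m_gt0 : (0 < m)%N.
Variables (al : R) (al_gt0 : 0 < al) (al_le1 : al <= 1).
Variables (sstar : 'M[R]_(m, n)) (sstar_NE : is_pure_NE sstar).
Variables (u : nat -> 'M[R]_(m, n)) (ii : nat -> 'I_m).
Hypothesis u0_profile : in_profile (u 0%N).
Hypothesis u_step : forall t, exists shat, is_best_response (ii t) (u t) shat /\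
  u t.+1 = alpha_update al (u t) (ii t) shat.

Definition gain_to_sstar (s : 'M[R]_(m, n)) i := dev_lin s i (fun j => sstar i j - s i j).

Definition most_improving (s : 'M[R]_(m, n)) : 'I_m :=
  [arg max_(i > Ordinal m_gt0) gain_to_sstar s i]%O.

Lemma sum_gain_to_sstar_le s :
  \sum_(k < m) gain_to_sstar s k <= m%:R * gain_to_sstar s (most_improving s).
Proof.
have le_max k : gain_to_sstar s k <= gain_to_sstar s (most_improving s).
  by rewrite /most_improving; case: arg_maxP => //= i _; apply.
apply: le_trans (ler_sum _ (fun k _ => le_max k)) _.
by rewrite sumr_const card_ord mulr_natl.
Qed.

Let gap t := potential sstar - potential (u t).

Lemma run_in_profile t : in_profile (u t).
Proof.
elim: t => [//|t IH]; have [shat [B ->]] := u_step t.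
by apply: (in_profile_alpha_update IH B); rewrite ltW.
Qed.

Lemma gap_nonincreasing : {homo gap : t t' / (t <= t')%N >-> t' <= t}.
Proof.
apply: homo_leq => [x|x y z|t]; [exact: lexx|by move=> /[swap]; apply: le_trans|].
have [shat [B E]] := u_step t.
have := potential_alpha_update (u t) (ii t) shat (al := al) ltac:(rewrite ltW //).
have := dev_gain_best_response_ge0 (run_in_profile t (ii t)) B.
rewrite /gap E => gain_ge0; have := mulr_ge0 (ltW al_gt0) gain_ge0; lra.
Qed.

Lemma gap_ge0 t : 0 <= gap t.
Proof.
exact: le_trans (curvature_ge0 _) (potential_gap_ge_curvature sstar_NE (run_in_profile t)).
Qed.

Lemma gap_drop eps : 0 < eps -> exists2 del, 0 < del &
  forall t, eps <= gap t -> ii t = most_improving (u t) -> gap t.+1 <= gap t - del.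
Proof.
move=> eps_gt0.
have m_pos : 0 < (m%:R : R) by rewrite ltr0n.
pose eta := eps / m%:R; pose tau := eta / (eta + 2 * strat_diam).
have eta_gt0 : 0 < eta by rewrite divr_gt0.
have tau_gt0 : 0 < tau by rewrite divr_gt0 //; have := strat_diam_ge0; lra.
exists (al * (tau * eta / 2)); first by rewrite mulr_gt0 // divr_gt0 // mulr_gt0.
move=> t gap_t ii_t; have [shat [B E]] := u_step t.
set i := ii t in B E ii_t; pose x j := sstar i j - u t i j.
have lin_ge : eta <= dev_lin (u t) i x.
  rewrite /eta ler_pdivrMr // mulrC; apply: le_trans gap_t _.
  apply: le_trans (potential_gap_le_dev_lin sstar (u t)) _.
  by rewrite /x ii_t; exact: sum_gain_to_sstar_le.
have quad_bd : 0 <= dev_quad x <= strat_diam.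
  by rewrite dev_quad_ge0 (dev_quad_le_strat_diam (run_in_profile t i) (sstar_NE.1 i)).
have [_ tau_le1 gain_lb] := quad_gain_lower_bound eta_gt0 lin_ge quad_bd.
rewrite -/tau in tau_le1 gain_lb.
have := dev_gain_best_response_ge (run_in_profile t i) (sstar_NE.1 i) B (t := tau)
  ltac:(rewrite ltW //).
have := potential_alpha_update (u t) i shat (al := al) ltac:(rewrite ltW //).
rewrite /gap E -/x -/tau => step_gain br_gain.
have : al * (tau * eta / 2) <= al * dev_gain (u t) i (fun j => shat j - u t i j).
  by rewrite ler_pM2l //; lra.
lra.
Qed.

Hypothesis most_improving_often :
  forall N, exists2 t, (N <= t)%N & ii t = most_improving (u t).

Lemma gap_small eps : 0 < eps -> exists N, gap N < eps.
Proof.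
move=> eps_gt0; have [//|no_small] := pselect (exists N, gap N < eps); exfalso.
have gap_ge_eps N : eps <= gap N by rewrite leNgt; apply/negP => ?; apply: no_small; exists N.
have [del del_gt0 drop] := gap_drop eps_gt0.
have descend K : exists t, gap t <= gap 0%N - K%:R * del.
  elim: K => [|K [t gap_t]]; first by exists 0%N; rewrite mul0r subr0.
  have [t' tt' good] := most_improving_often t.
  exists t'.+1; have := drop t' (gap_ge_eps t') good; have := gap_nonincreasing tt'.
  by rewrite -natr1 mulrDl mul1r; lra.
have := archi_boundP (divr_ge0 (gap_ge0 0%N) (ltW del_gt0)); rewrite ltr_pdivrMr //.
have [t gap_t] := descend (Num.Def.archi_bound (gap 0%N / del)).
by have := gap_ge0 t; lra.
Qed.

Lemma run_cvg : u @ \oo --> sstar.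
Proof.
apply: cvg_mx_entrywise => e e_gt0 i j.
have half_slope_gt0 : 0 < slope j / 2 by rewrite divr_gt0 // slope_gt0.
have [N gapN] := gap_small (mulr_gt0 half_slope_gt0 (exprn_gt0 2 e_gt0)).
exists N => // t /= Nt.
have := gap_nonincreasing Nt; have := curvature_ge_entry (u t - sstar) i j.
have := potential_gap_ge_curvature sstar_NE (run_in_profile t).
rewrite !mxE /gap in gapN * => gap_ge curv_ge gap_le.
have : (u t i j - sstar i j) ^+ 2 < e ^+ 2 by rewrite -(ltr_pM2l half_slope_gt0); lra.
by rewrite ltr_norml !expr2 => sq_lt; apply/andP; split; nra.
Qed.

End Descent.
End Game.

Lemma measure_bigsetU_fin d (U : ringOfSetsType d) (R : realFieldType)
    (mu : {content set U -> \bar R}) (J : finType) (F : J -> set U) :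
  (forall j, measurable (F j)) -> (forall j k, j != k -> F j `&` F k = set0) ->
  mu (\big[setU/set0]_j F j) = (\sum_j mu (F j))%E.
Proof.
move=> mF dF.
rewrite (eq_bigl [in predT]) // big_enum_val [RHS](eq_bigl [in predT]) // [RHS]big_enum_val.
rewrite measure_bigsetU_ord //; apply/trivIsetP => i k _ _ ik.
by apply: dF; apply: contra ik => /eqP/enum_val_inj ->.
Qed.

Section IndependentDraws.
Variables (R : realType) (m : nat).
Hypothesis m_gt0 : (0 < m)%N.
Variables (pmin : R) (pmin_gt0 : 0 < pmin) (pi : nat -> 'I_m -> R).
Hypothesis pi_ge : forall t i, pmin <= pi t i.
Hypothesis pi_sum : forall t, \sum_(i < m) pi t i = 1.
Variables (dT : measure_display) (T : measurableType dT) (P : probability T R).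
Variable I : nat -> T -> 'I_m.
Hypothesis I_meas : forall t k, measurable (I t @^-1` [set k]).
Hypothesis I_indep : forall (ts : seq nat) (k : nat -> 'I_m), uniq ts ->
  P (\bigcap_(t in [set` ts]) (I t @^-1` [set k t])) = (\prod_(t <- ts) pi t (k t))%:E.

Definition prefix_determined (N : nat) (B : set T) :=
  forall w w', (forall t, (t < N)%N -> I t w = I t w') -> B w -> B w'.

Definition cylinder N (f : {ffun 'I_N -> 'I_m}) : set T :=
  [set w | forall t : 'I_N, I t w = f t].

Definition extend N (f : {ffun 'I_N -> 'I_m}) (y : 'I_m) (t : nat) : 'I_m :=
  if insub t is Some t' then f t' else y.

Lemma extend_val N (f : {ffun 'I_N -> 'I_m}) y (t : 'I_N) : extend f y t = f t.
Proof. by rewrite /extend valK. Qed.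

Lemma extend_out N (f : {ffun 'I_N -> 'I_m}) y : extend f y N = y.
Proof. by rewrite /extend insubF ?ltnn. Qed.

Lemma cylinder_bigcap N (f : {ffun 'I_N -> 'I_m}) y :
  cylinder f = \bigcap_(t in `I_N) I t @^-1` [set extend f y t].
Proof.
apply/seteqP; split=> w /= cyl_w t; last by rewrite -(extend_val f y) cyl_w /=.
by move=> tN; rewrite /= (extend_val f y (Ordinal tN)); exact: (cyl_w (Ordinal tN)).
Qed.

Lemma cylinder_setI_draw N (f : {ffun 'I_N -> 'I_m}) y :
  cylinder f `&` I N @^-1` [set y] = \bigcap_(t in `I_N.+1) I t @^-1` [set extend f y t].
Proof.
rewrite (cylinder_bigcap f y); apply/seteqP; split=> w /=.
  move=> [cyl_w Iw] t /=; rewrite ltnS leq_eqVlt => /orP[/eqP ->|]; last exact: cyl_w.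
  by rewrite extend_out.
move=> draws_w; split=> [t /= tN|]; first by apply: draws_w; rewrite /= ltnS ltnW.
by rewrite /= -(extend_out f y); apply: draws_w => /=.
Qed.

Lemma cylinder_measurable N (f : {ffun 'I_N -> 'I_m}) : measurable (cylinder f).
Proof.
rewrite (cylinder_bigcap f (Ordinal m_gt0)).
by apply: bigcap_measurableType => t _; exact: I_meas.
Qed.

Lemma prob_cylinder_draw N (f : {ffun 'I_N -> 'I_m}) y :
  P (cylinder f `&` I N @^-1` [set y]) = ((pi N y)%:E * P (cylinder f))%E.
Proof.
rewrite cylinder_setI_draw (cylinder_bigcap f y) -!Iiota !I_indep ?iota_uniq //.
by rewrite -EFinM -addn1 iotaD big_cat big_seq1 /= add0n extend_out mulrC.
Qed.

Lemma cylinder_disjoint N (f g : {ffun 'I_N -> 'I_m}) :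
  f != g -> cylinder f `&` cylinder g = set0.
Proof.
move=> /eqP fg; apply/seteqP; split=> // w [cyl_f cyl_g]; apply: fg.
by apply/ffunP => t; rewrite -(cyl_f t) -(cyl_g t).
Qed.

Lemma prefix_cover N (B : set T) :
  B = \big[setU/set0]_(f : {ffun 'I_N -> 'I_m}) (cylinder f `&` B).
Proof.
rewrite -bigcup_seq; apply/seteqP; split=> [w Bw|w [f _ []] //].
by exists [ffun t : 'I_N => I t w]; [exact: mem_index_enum|split=> // t; rewrite ffunE].
Qed.

Lemma cylinder_setI_prefix N (f : {ffun 'I_N -> 'I_m}) B : prefix_determined N B ->
  cylinder f `&` B = set0 \/ cylinder f `&` B = cylinder f.
Proof.
move=> B_prefix; have [[w0 [cyl_w0 B_w0]]|none] := pselect (exists w, cylinder f w /\ B w).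
  right; apply/seteqP; split=> [w []//|w cyl_w]; split=> //.
  by apply: B_prefix B_w0 => t tN; rewrite (cyl_w0 (Ordinal tN)) (cyl_w (Ordinal tN)).
by left; apply/seteqP; split=> // w [cyl_w B_w]; apply: none; exists w.
Qed.

Lemma prefix_determined_measurable N B : prefix_determined N B -> measurable B.
Proof.
move=> B_prefix; rewrite (prefix_cover N B); apply: bigsetU_measurable => f _.
by case: (cylinder_setI_prefix f B_prefix) => ->; [exact: measurable0|exact: cylinder_measurable].
Qed.

Lemma measure_prefix_partition N A : measurable A ->
  P A = (\sum_(f : {ffun 'I_N -> 'I_m}) P (cylinder f `&` A))%E.
Proof.
move=> mA; rewrite {1}(prefix_cover N A) measure_bigsetU_fin // => [f|f g fg].
  by apply: measurableI => //; exact: cylinder_measurable.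
by rewrite setIACA (cylinder_disjoint fg) set0I.
Qed.

Lemma prob_prefix_draw N B y : prefix_determined N B ->
  P (B `&` I N @^-1` [set y]) = ((pi N y)%:E * P B)%E.
Proof.
move=> B_prefix; have mB := prefix_determined_measurable B_prefix.
rewrite (measure_prefix_partition N (measurableI _ _ mB (I_meas N y))).
rewrite (measure_prefix_partition N mB) ge0_sume_distrr => [|f _]; last exact: measure_ge0.
apply: eq_bigr => f _; rewrite setIA.
case: (cylinder_setI_prefix f B_prefix) => ->; last exact: prob_cylinder_draw.
by rewrite set0I measure0 mule0.
Qed.

Section Selector.
Variable N : nat.
Variables (B : set T) (h : T -> 'I_m).
Hypothesis B_prefix : prefix_determined N B.
Hypothesis h_prefix : forall w w', (forall t, (t < N)%N -> I t w = I t w') -> h w = h w'.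

Let By y := B `&` [set w | h w = y].

Let By_prefix y : prefix_determined N (By y).
Proof.
by move=> w w' same [Bw hw]; split; [exact: B_prefix Bw|rewrite /= -(h_prefix same)].
Qed.

Let By_measurable y : measurable (By y).
Proof. exact: prefix_determined_measurable (@By_prefix y). Qed.

Let By_disjoint y y' : y != y' -> By y `&` By y' = set0.
Proof.
move=> /eqP yy'; apply/seteqP; split=> // w [[_ hy] [_ hy']].
by apply: yy'; rewrite -hy -hy'.
Qed.

Lemma prob_hit_ge : (pmin%:E * P B <= P (B `&` [set w | I N w = h w]))%E.
Proof.
have B_split : B = \big[setU/set0]_y By y.
  rewrite -bigcup_seq; apply/seteqP; split=> [w Bw|w [y _ []] //].
  by exists (h w); [exact: mem_index_enum|].
have hit_split : B `&` [set w | I N w = h w] = \big[setU/set0]_y (By y `&` I N @^-1` [set y]).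
  rewrite -bigcup_seq; apply/seteqP; split=> [w [Bw hit]|w [y _ [[Bw hy] Iy]]].
    by exists (h w); [exact: mem_index_enum|].
  by split=> //=; rewrite Iy hy.
have P_B : P B = (\sum_y P (By y))%E.
  by rewrite {1}B_split measure_bigsetU_fin.
have P_hit : P (B `&` [set w | I N w = h w]) = (\sum_y P (By y `&` I N @^-1` [set y]))%E.
  rewrite hit_split measure_bigsetU_fin // => [y|y y' yy']; first exact: measurableI.
  by rewrite setIACA By_disjoint ?set0I.
rewrite P_B P_hit ge0_sume_distrr => [|y _]; last exact: measure_ge0.
apply: lee_sum => y _; rewrite prob_prefix_draw //.
by apply: lee_wpmul2r; [exact: measure_ge0|rewrite lee_fin].
Qed.

Lemma prob_miss_le : (P (B `&` [set w | I N w != h w]) <= (1 - pmin)%:E * P B)%E.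
Proof.
pose hit := B `&` [set w | I N w = h w]; pose miss := B `&` [set w | I N w != h w].
have same_draws w w' : (forall t, (t < N.+1)%N -> I t w = I t w') ->
    [/\ forall t, (t < N)%N -> I t w = I t w', I N w = I N w' & h w = h w'].
  move=> same; have sameN t : (t < N)%N -> I t w = I t w' by move=> tN; apply: same; exact: ltnW.
  by split=> //; [exact: same|exact: h_prefix].
have m_hit : measurable hit.
  apply: (@prefix_determined_measurable N.+1) => w w' /same_draws[sameN IN hw] [Bw hitw].
  by split; [exact: B_prefix Bw|rewrite /= -IN -hw].
have m_miss : measurable miss.
  apply: (@prefix_determined_measurable N.+1) => w w' /same_draws[sameN IN hw] [Bw missw].
  by split; [exact: B_prefix Bw|rewrite /= -IN -hw].
have B_split : B = hit `|` miss.
  apply/seteqP; split=> [w Bw|w [[]|[]]//].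
  by case: (eqVneq (I N w) (h w)) => [hitw|missw]; [left|right].
have P_B : P B = (P hit + P miss)%E.
  rewrite {1}B_split measureU //; apply/seteqP; split=> // w [[_ hitw] [_ /= /eqP]].
  by rewrite hitw.
have P_hit : P hit = (fine (P hit))%:E by rewrite fineK // fin_num_measure.
have P_miss : P miss = (fine (P miss))%:E by rewrite fineK // fin_num_measure.
have := prob_hit_ge; rewrite -/hit -/miss P_B P_hit P_miss -EFinD -!EFinM !lee_fin.
lra.
Qed.

End Selector.

Lemma pmin_le1 : pmin <= 1.
Proof.
apply: le_trans (pi_ge 0 (Ordinal m_gt0)) _.
rewrite -(pi_sum 0) (bigD1 (Ordinal m_gt0)) //= lerDl.
by apply: sumr_ge0 => i _; exact: le_trans (ltW pmin_gt0) (pi_ge 0 i).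
Qed.

Section HitOften.
Variable h : nat -> T -> 'I_m.
Hypothesis h_prefix :
  forall t w w', (forall k, (k < t)%N -> I k w = I k w') -> h t w = h t w'.

Definition miss_run N L := [set w | forall t, (N <= t < N + L)%N -> I t w != h t w].

Lemma miss_run_prefix_determined N L : prefix_determined (N + L) (miss_run N L).
Proof.
move=> w w' same miss_w t /andP[Nt tNL].
have h_eq : h t w = h t w' by apply: h_prefix => k kt; apply: same; exact: ltn_trans kt tNL.
by rewrite -(same t tNL) -h_eq; apply: miss_w; rewrite Nt.
Qed.

Lemma miss_runS N L :
  miss_run N L.+1 = miss_run N L `&` [set w | I (N + L) w != h (N + L) w].
Proof.
apply/seteqP; split=> [w miss_w|w [miss_w missNL] t /andP[Nt]].
  split=> [t /andP[Nt tNL]|]; first by apply: miss_w; rewrite Nt addnS ltnS ltnW.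
  by apply: miss_w; rewrite leq_addr addnS ltnS /=.
rewrite addnS ltnS leq_eqVlt => /orP[/eqP -> //|tNL].
by apply: miss_w; rewrite Nt.
Qed.

Lemma prob_miss_run N L : (P (miss_run N L) <= ((1 - pmin) ^+ L)%:E)%E.
Proof.
elim: L => [|L IH].
  rewrite expr0; apply: probability_le1.
  exact: prefix_determined_measurable (@miss_run_prefix_determined N 0).
rewrite miss_runS; apply: le_trans (prob_miss_le (@miss_run_prefix_determined N L) _) _.
  by move=> w w' same; exact: h_prefix.
rewrite exprS EFinM; apply: lee_wpmul2l => //.
by rewrite lee_fin subr_ge0 pmin_le1.
Qed.

Lemma prob_miss_forever N : P (\bigcap_L miss_run N L) = 0%E.
Proof.
have m_run L := prefix_determined_measurable (@miss_run_prefix_determined N L).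
apply/eqP; rewrite -measure_le0; apply/lee_addgt0Pr => e e_gt0; rewrite add0e.
have q_ge0 : 0 <= 1 - pmin by rewrite subr_ge0 pmin_le1.
have q_lt1 : `|1 - pmin| < 1 by rewrite ger0_norm // gtrBl.
have /cvgrPdist_lt/(_ e e_gt0)[L _ small] := cvg_expr q_lt1.
have := small L (leqnn L); rewrite /= sub0r normrN ger0_norm ?exprn_ge0 // => qL_lt.
apply: (@le_trans _ _ (P (miss_run N L))).
  apply: le_measure; rewrite ?inE //; first exact: bigcapT_measurable.
  exact: bigcap_inf.
by apply: le_trans (prob_miss_run N L) _; rewrite lee_fin ltW.
Qed.

Lemma ae_hit_often : {ae P, forall w, forall N, exists2 t, (N <= t)%N & I t w = h t w}.
Proof.
have null : P.-negligible (\bigcup_N \bigcap_L miss_run N L).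
  apply: negligible_bigcup => N; apply/negligibleP; last exact: prob_miss_forever.
  apply: bigcapT_measurable => L.
  exact: prefix_determined_measurable (@miss_run_prefix_determined N L).
apply: negligibleS null => w /= not_often; apply: contrapT => not_null; apply: not_often => N.
apply: contrapT => no_hit; apply: not_null; exists N => // L _ t /andP[Nt _].
by apply/eqP => hit; apply: no_hit; exists t.
Qed.

End HitOften.
End IndependentDraws.

Unset Implicit Arguments.
Set Strict Implicit.

Theorem theorem4p4
  (R : realType) (m n : nat) (hm : (0 < m)%N) (hn : (0 < n)%N)
  (c : 'I_m -> R) (d : 'I_n -> R) (rmax rmin : R)
  (hc : forall i, 0 < c i) (hd : forall j, 0 < d j)
  (hrmin : 0 < rmin) (hr : rmin < rmax)
  (alpha : R) (halpha0 : 0 < alpha) (halpha1 : alpha <= 1)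
  (pmin : R) (hpmin : 0 < pmin) (pi : nat -> 'I_m -> R)
  (hpi_min : forall t i, pmin <= pi t i)
  (hpi_sum : forall t, \sum_(i < m) pi t i = 1)
  (dT : measure_display) (T : measurableType dT) (P : probability T R)
  (I : nat -> T -> 'I_m)
  (hI_meas : forall t k, measurable (I t @^-1` [set k]))
  (hI_indep : forall (ts : seq nat) (k : nat -> 'I_m), uniq ts ->
     P (\bigcap_(t in [set` ts]) (I t @^-1` [set k t])) =
     (\prod_(t <- ts) pi t (k t))%:E)
  (s1 : 'M[R]_(m, n)) (hs1 : in_profile c s1)
  (s : nat -> T -> 'M[R]_(m, n))
  (hs_init : forall w, s 0%N w = s1)
  (hs_step : forall t w, exists shat : 'I_n -> R,
     is_best_response c d rmax rmin (I t w) (s t w) shat /\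
     s t.+1 w = alpha_update alpha (s t w) (I t w) shat)
  (sstar : 'M[R]_(m, n)) (hstar : is_pure_NE c d rmax rmin sstar) :
  {ae P, forall w, (fun t => s t w) @ \oo --> sstar}.
Proof.
pose target t w := most_improving d rmax rmin hm sstar (s t w).
have s0_const w w' : s 0%N w = s 0%N w' by rewrite !hs_init.
have s_prefix := alpha_run_prefix_determined hd hr s0_const hs_step.
have target_prefix t w w' : (forall k, (k < t)%N -> I k w = I k w') -> target t w = target t w'.
  by move=> same; rewrite /target (s_prefix t w w' same).
have := ae_hit_often hm hpmin hpi_min hpi_sum hI_meas hI_indep target_prefix.
apply: filterS => w hit_often.
apply: (run_cvg hd hr halpha0 halpha1 hstar (u := fun t => s t w) (ii := fun t => I t w)).
- by rewrite hs_init.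
- by move=> t; exact: hs_step.
- exact: hit_often.
Qed.
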